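(* Let $(\Omega,\mathcal F,\mathcal P)$ be pre-Hahn-localizable with localization $\mathcal Q$. Then (1) $\mathcal F^{\mathcal P}=\mathcal F^{\mathcal Q}$, and (2) $(\Omega,\mathcal F^{\mathcal P},\mathcal P)$ (measures extended to $\mathcal F^{\mathcal P}$) is pre-Hahn-localizable. Moreover, if $(\Omega,\mathcal F,\mathcal P)$ is Hahn-localizable with a localization having pairwise disjoint supports, then $(\Omega,\mathcal F^{\mathcal P},\mathcal P)$ is Hahn-localizable.
   Context: $\mathcal P$ is a family of probability measures on $\mathcal F$. For a probability measure $P$, $\mathcal F^P=\{F\cup Z:F\in\mathcal F, Z\subseteq N \text{ for some } N\in\mathcal F,P(N)=0\}$, and for a family $\mathcal R$, $\mathcal F^{\mathcal R}=\bigcap_{R\in\mathcal R}\mathcal F^R$; each measure extends uniquely to its completion and hence to $\mathcal F^{\mathcal R}$. $\mathcal A\lll\mathcal B$ means every $A\in\mathcal A$ is absolutely continuous w.r.t. some $B\in\mathcal B$; $\mathrm{sconv}$ denotes countable convex combinations. $\mathcal P$ is pre-Hahn-localizable if there are a family $\mathcal Q$ of probability measures on $\mathcal F$ (localization) and sets $S_Q\in\mathcal F$ (supports) with $Q(S_R)=\delta_{QR}$ for $Q,R\in\mathcal Q$ and $\mathcal Q\lll\mathcal P\lll\mathrm{sconv}(\mathcal Q)$. It is Hahn-localizable if this holds with, in addition: for every family $E_Q\in\mathcal F$, $E_Q\subseteq S_Q$, there is $S\in\mathcal F$ with $Q(E_Q\setminus S)=0$ for all $Q$, and such that any $F\in\mathcal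 F$ with $Q(E_Q\setminus F)=0$ for all $Q$ satisfies $Q(S\setminus F)=0$ for all $Q$. *)

From HB Require Import structures.
From mathcomp Require Import all_boot all_order all_algebra.
From mathcomp Require Import all_classical all_reals all_analysis.
Set Implicit Arguments. Unset Strict Implicit. Unset Printing Implicit Defensive.
Import Order.TTheory GRing.Theory Num.Theory.
Import numFieldNormedType.Exports.
Local Open Scope classical_set_scope.
Local Open Scope ring_scope.

Section Defs.
Variables (R : realType) (T : Type).

Definition prob_on (F : set (set T)) (mu : set T -> R) : Prop :=
  [/\ mu setT = 1,
      (forall A, F A -> 0 <= mu A) &
      (forall A : nat -> set T, (forall n, F (A n)) -> trivIset setT A ->
         (fun n => \sum_(0 <= i < n) mu (A i)) @ \oo --> mu (\bigcup_n A n))].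

Definition abs_cont (F : set (set T)) (mu nu : set T -> R) : Prop :=
  forall A, F A -> nu A = 0 -> mu A = 0.

Definition eq_on (F : set (set T)) (mu nu : set T -> R) : Prop :=
  forall A, F A -> mu A = nu A.

Definition sconv (F : set (set T)) (I : Type) (Q : I -> set T -> R)
    (mu : set T -> R) : Prop :=
  exists (c : nat -> R) (q : nat -> I),
    [/\ (forall n, 0 <= c n),
        (fun n => \sum_(0 <= k < n) c k) @ \oo --> (1 : R) &
        (forall A, F A ->
           (fun n => \sum_(0 <= k < n) c k * Q (q k) A) @ \oo --> mu A)].

Definition fam_ac (F : set (set T)) (I J : Type)
    (A : I -> set T -> R) (B : J -> set T -> R) : Prop :=
  forall i, exists j, abs_cont F (A i) (B j).

Definition fam_ac_sconv (F : set (set T)) (J I : Type)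
    (P : J -> set T -> R) (Q : I -> set T -> R) : Prop :=
  forall j, exists mu, sconv F Q mu /\ abs_cont F (P j) mu.

Definition completion (F : set (set T)) (mu : set T -> R) : set (set T) :=
  [set A | exists B N Z, [/\ F B, F N, mu N = 0, Z `<=` N & A = B `|` Z]].

Definition fam_completion (F : set (set T)) (I : Type) (Rs : I -> set T -> R)
  : set (set T) := [set A | forall i, completion F (Rs i) A].

(* canonical extension of mu (given on F) to all sets: the outer measure;
   on the completion F^mu it is the unique extension of mu *)
Definition cext (F : set (set T)) (mu : set T -> R) : set T -> R :=
  fun A => inf [set mu B | B in [set B | F B /\ A `<=` B]].

Definition localization (F : set (set T)) (J I : Type)
    (P : J -> set T -> R) (Q : I -> set T -> R) (S : I -> set T) : Prop :=
  [/\ (forall i, prob_on F (Q i)),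
      (forall i, F (S i)),
      (forall i k, Q i (S k) = if `[< eq_on F (Q i) (Q k) >] then 1 else 0),
      fam_ac F Q P &
      fam_ac_sconv F P Q].

Definition hahn_cond (F : set (set T)) (I : Type)
    (Q : I -> set T -> R) (S : I -> set T) : Prop :=
  forall E : I -> set T, (forall i, F (E i) /\ E i `<=` S i) ->
    exists S0, [/\ F S0,
      (forall i, Q i (E i `\` S0) = 0) &
      (forall G, F G -> (forall i, Q i (E i `\` G) = 0) ->
         forall i, Q i (S0 `\` G) = 0)].

Definition pre_hahn_localizable (F : set (set T)) (J : Type)
    (P : J -> set T -> R) : Prop :=
  [/\ sigma_algebra setT F, (forall j, prob_on F (P j)) &
      exists (I : Type) (Q : I -> set T -> R) (S : I -> set T),
        localization F P Q S].

Definition hahn_localizable (F : set (set T)) (J : Type)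
    (P : J -> set T -> R) : Prop :=
  [/\ sigma_algebra setT F, (forall j, prob_on F (P j)) &
      exists (I : Type) (Q : I -> set T -> R) (S : I -> set T),
        localization F P Q S /\ hahn_cond F Q S].

End Defs.

(* Completions with respect to P and to Q coincide: Q_i << P_j carries P-null sets to
   Q-null sets, and P_j << sum_k c_k Q_(q k) carries them back, because a set trapped
   between F-sets up to a Q_(q k)-null set for every k lies between the union L of the
   inner sets and the intersection U of the outer ones, and U \ L is null for the
   combination. The outer measures extend every P_j, Q_i and convex combination to this
   completion, and their null sets are still covered by null sets of F, so the
   localization survives with the same supports. For the Hahn condition, approximate each
   E_i from inside by B_i in F and take a Hahn witness S0 of (B_i): with disjoint supports
   the minimality of S0 need only be tested against one component i at a time, and
   S0 \ (S_i \ C) turns such a test into one over sets of F. *)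

From HB Require Import structures.
From mathcomp Require Import all_boot all_order all_algebra.
From mathcomp Require Import all_classical all_reals all_analysis.
Set Implicit Arguments. Unset Strict Implicit. Unset Printing Implicit Defensive.
Import Order.TTheory GRing.Theory Num.Theory.
Import numFieldNormedType.Exports.
Local Open Scope classical_set_scope.
Local Open Scope ring_scope.

Lemma cvg_eventually_cst (R : realType) (u : nat -> R) (c l : R) :
  u @ \oo --> l -> (\forall n \near \oo, u n = c) -> l = c.
Proof. by move=> ul uc; exact: cvg_unique ul (cvg_near_cst c uc). Qed.

Lemma series_ge0_eq0 (R : realType) (f : nat -> R) :
  (forall i, 0 <= f i) -> (fun n => \sum_(0 <= i < n) f i) @ \oo --> 0 ->
  forall k, f k = 0.
Proof.
move=> f0 sum0 k; apply/eqP; rewrite eq_le f0 andbT.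
have sum_nd : nondecreasing_seq (fun n => \sum_(0 <= i < n) f i).
  exact: nondecreasing_series (fun n _ _ => f0 n).
have := nondecreasing_cvgn_le sum_nd (cvgP _ sum0) k.+1.
rewrite (cvg_lim _ sum0) // big_nat_recr //=; apply: le_trans.
by rewrite lerDr sumr_ge0.
Qed.

Section SigmaAlgebra.
Variables (T : Type) (F : set (set T)).
Hypothesis sF : sigma_algebra setT F.

Lemma sigma0 : F set0. Proof. by case: sF. Qed.

Lemma sigmaC A : F A -> F (~` A).
Proof. by case: sF => _ FC _ /FC; rewrite setTD. Qed.

Lemma sigma_bigcup (A : nat -> set T) : (forall n, F (A n)) -> F (\bigcup_n A n).
Proof. by case: sF => _ _; apply. Qed.

Lemma sigmaT : F setT. Proof. by rewrite -setC0; exact/sigmaC/sigma0. Qed.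

Lemma sigma_bigcap (A : nat -> set T) : (forall n, F (A n)) -> F (\bigcap_n A n).
Proof.
by move=> FA; rewrite -[X in F X]setCK setC_bigcap; apply/sigmaC/sigma_bigcup => n; exact: sigmaC.
Qed.

Lemma sigmaU A B : F A -> F B -> F (A `|` B).
Proof. by move=> FA FB; rewrite -bigcup2E; apply: sigma_bigcup => -[|[|n]] //=; exact: sigma0. Qed.

Lemma sigmaI A B : F A -> F B -> F (A `&` B).
Proof. by move=> FA FB; rewrite -[X in F X]setCK setCI; apply/sigmaC/sigmaU; exact: sigmaC. Qed.

Lemma sigmaD A B : F A -> F B -> F (A `\` B).
Proof. by move=> FA FB; apply: sigmaI => //; exact: sigmaC. Qed.

End SigmaAlgebra.

Section ProbabilityOn.
Variables (R : realType) (T : Type) (F : set (set T)) (mu : set T -> R).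
Hypotheses (sF : sigma_algebra setT F) (mu_prob : prob_on F mu).

Lemma prob_ge0 A : F A -> 0 <= mu A.
Proof. by case: mu_prob => _ + _; apply. Qed.

Lemma prob_sigma_additive (A : nat -> set T) :
  (forall n, F (A n)) -> trivIset setT A ->
  (fun n => \sum_(0 <= i < n) mu (A i)) @ \oo --> mu (\bigcup_n A n).
Proof. by case: mu_prob => _ _; apply. Qed.

(* The partial sums [n * mu set0] converge, so their increments [mu set0] tend to [0]. *)
Lemma prob0 : mu set0 = 0.
Proof.
have triv0 : trivIset setT (fun _ : nat => @set0 T) by move=> i j _ _ [x []].
have := prob_sigma_additive (fun=> sigma0 sF) triv0; rewrite bigcup0 // => sums.
have shifted := sums; rewrite -cvg_shiftS in shifted.
rewrite -[RHS](subrr (mu set0)); apply/esym/(cvg_eventually_cst (cvgB shifted sums)).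
by near=> n; rewrite !fctE /mk_sequence big_nat_recr // addrC addKr.
Unshelve. all: by end_near.
Qed.

Lemma prob_setU A B : F A -> F B -> A `&` B = set0 -> mu (A `|` B) = mu A + mu B.
Proof.
move=> FA FB; rewrite trivIset_bigcup2 => tAB.
have F2 n : F (bigcup2 A B n) by case: n => [|[|n]] //=; exact: sigma0.
have := prob_sigma_additive F2 tAB; rewrite bigcup2E => /cvg_eventually_cst; apply.
have sum2 k : \sum_(0 <= i < k.+2) mu (bigcup2 A B i) = mu A + mu B.
  by rewrite !big_nat_recl // big1 ?addr0 // => i _; exact: prob0.
near=> n; rewrite -(subnK (_ : 2 <= n)%N) ?addn2 ?sum2 //.
by near: n; exists 2%N.
Unshelve. all: by end_near.
Qed.

Lemma prob_le A B : F A -> F B -> A `<=` B -> mu A <= mu B.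
Proof.
move=> FA FB AB; rewrite -(setDUK AB) prob_setU ?setDIK //; last exact: sigmaD.
by rewrite lerDl prob_ge0 //; exact: sigmaD.
Qed.

Lemma prob_null_sub A N : F A -> F N -> A `<=` N -> mu N = 0 -> mu A = 0.
Proof. by move=> FA FN AN N0; apply/eqP; rewrite eq_le prob_ge0 // andbT -N0 prob_le. Qed.

Lemma prob_setU_null A N : F A -> F N -> mu N = 0 -> mu (A `|` N) = mu A.
Proof.
move=> FA FN N0; have FNA : F (N `\` A) by exact: sigmaD.
rewrite -[A `|` N]setD0 -(setDv A) -setUDr prob_setU ?setDIK //.
by rewrite (prob_null_sub FNA FN _ N0) ?addr0 // => x [].
Qed.

Lemma prob_bigcup_null (N : nat -> set T) :
  (forall n, F (N n)) -> (forall n, mu (N n) = 0) -> mu (\bigcup_n N n) = 0.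
Proof.
move=> FN N0.
have FU n : F (\big[setU/set0]_(k < n) N k).
  by elim: n => [|n IH]; rewrite ?big_ord0 ?big_ord_recr; [exact: sigma0 | exact: sigmaU].
have FD n : F (seqDU N n) by exact: sigmaD.
rewrite seqDU_bigcup_eq.
apply: (cvg_eventually_cst (prob_sigma_additive FD (@trivIset_seqDU _ N))).
apply: nearW => n; apply: big1 => i _.
by apply: (prob_null_sub (FD i) (FN i) _ (N0 i)) => x [].
Qed.

Lemma prob_setC_null A : F A -> mu A = 1 -> mu (~` A) = 0.
Proof.
move=> FA A1; have := prob_setU FA (sigmaC sF FA) (setICr A).
rewrite setUv A1; case: mu_prob => -> _ _ /esym.
by rewrite -[X in _ = X]addr0 => /addrI.
Qed.

End ProbabilityOn.

Lemma completion_choice (R : realType) (T : Type) (F : set (set T)) (K : Type)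
    (mu : K -> set T -> R) (A : K -> set T) :
  (forall k, completion F (mu k) (A k)) ->
  exists B N Z : K -> set T, forall k,
    [/\ F (B k), F (N k), mu k (N k) = 0, Z k `<=` N k & A k = B k `|` Z k].
Proof.
move=> cA; have /choice[f hf] : forall k, exists t : set T * set T * set T,
    [/\ F t.1.1, F t.1.2, mu k t.1.2 = 0, t.2 `<=` t.1.2 & A k = t.1.1 `|` t.2].
  by move=> k; have [B [N [Z ?]]] := cA k; exists (B, N, Z).
by exists (fun k => (f k).1.1), (fun k => (f k).1.2), (fun k => (f k).2).
Qed.

Section Completion.
Variables (R : realType) (T : Type) (F : set (set T)) (mu : set T -> R).
Hypotheses (sF : sigma_algebra setT F) (mu_prob : prob_on F mu).

Lemma sub_completion : F `<=` completion F mu.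
Proof.
move=> A FA; exists A, set0, set0; split; rewrite ?setU0 //.
- exact: sigma0.
- exact: (prob0 sF mu_prob).
Qed.

Lemma completion_sigma : sigma_algebra setT (completion F mu).
Proof.
split.
- exact/sub_completion/(sigma0 sF).
- move=> _ [B [N [Z [FB FN N0 ZN ->]]]]; rewrite setTD.
  exists (~` (B `|` N)), N, (N `&` ~` (B `|` Z)); split => //.
  + by apply/(sigmaC sF)/(sigmaU sF).
  + apply/seteqP; split => [x nBZ|x [nBN|[_ nBZ]] //].
      have [Nx|nNx] := pselect (N x); first by right.
      by left=> -[Bx|Nx]; [apply: nBZ; left|].
    by move=> [Bx|/ZN Nx]; apply: nBN; [left|right].
- move=> A /completion_choice[B [N [Z hA]]].
  exists (\bigcup_n B n), (\bigcup_n N n), (\bigcup_n Z n); split.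
  + by apply: sigma_bigcup => // n; case: (hA n).
  + by apply: sigma_bigcup => // n; case: (hA n).
  + by apply: (prob_bigcup_null sF mu_prob) => // n; case: (hA n).
  + by move=> x [n _ Zx]; exists n => //; case: (hA n) => _ _ _ /(_ x Zx).
  + by rewrite -bigcupU; apply: eq_bigcupr => n _; case: (hA n).
Qed.

Lemma cext_le A C : F C -> A `<=` C -> cext F mu A <= mu C.
Proof.
move=> FC AC; apply: ge_inf; last by exists C.
by exists 0 => _ [B [FB _] <-]; exact: (prob_ge0 mu_prob).
Qed.

Lemma cext_ge A B : F B -> B `<=` A -> mu B <= cext F mu A.
Proof.
move=> FB BA; apply: lb_le_inf; first by exists (mu setT), setT => //; split; [exact: sigmaT|].
by move=> _ [C [FC AC] <-]; apply: (prob_le sF mu_prob) => // x /BA /AC.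
Qed.

Lemma cext_ge0 A : 0 <= cext F mu A.
Proof. by apply: le_trans (cext_ge _ _); [exact: (prob_ge0 mu_prob (sigma0 sF)) | exact: sigma0 | ]. Qed.

Lemma cext_le1 A : cext F mu A <= 1.
Proof. by case: mu_prob => <- _ _; apply: cext_le => //; exact: sigmaT. Qed.

Lemma cextF A : F A -> cext F mu A = mu A.
Proof. by move=> FA; apply/eqP; rewrite eq_le cext_le // cext_ge. Qed.

Lemma cext_null A N : F N -> A `<=` N -> mu N = 0 -> cext F mu A = 0.
Proof. by move=> FN AN N0; apply/eqP; rewrite eq_le cext_ge0 -N0 cext_le. Qed.

Lemma cext_completion B N Z : F B -> F N -> mu N = 0 -> Z `<=` N ->
  cext F mu (B `|` Z) = mu B.
Proof.
move=> FB FN N0 ZN; have BZ : B `<=` B `|` Z by move=> x; left.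
apply/eqP; rewrite eq_le cext_ge // andbT.
rewrite -(prob_setU_null sF mu_prob FB FN N0) cext_le //; first exact: sigmaU.
by move=> x [Bx|/ZN Nx]; [left|right].
Qed.

Lemma cext_null_cover A : completion F mu A -> cext F mu A = 0 ->
  exists H, [/\ F H, A `<=` H & mu H = 0].
Proof.
move=> [B [N [Z [FB FN N0 ZN ->]]]] cA0; exists (B `|` N); split.
- exact: sigmaU.
- by move=> x [Bx|/ZN Nx]; [left|right].
- by rewrite (prob_setU_null sF mu_prob) // -cA0 (cext_completion FB FN N0 ZN).
Qed.

Lemma cext_prob G : G `<=` completion F mu -> prob_on G (cext F mu).
Proof.
move=> GC; split.
- by rewrite cextF; [case: mu_prob | exact: sigmaT].
- by move=> A _; exact: cext_ge0.
- move=> A GA tA; have [B [N [Z hA]]] := completion_choice (fun n => GC _ (GA n)).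
  have FB n : F (B n) by case: (hA n).
  have BA n : B n `<=` A n by case: (hA n) => _ _ _ _ -> x; left.
  have tB : trivIset setT B.
    by move=> i j _ _ [x [Bix Bjx]]; apply: tA => //; exists x; split; apply: BA.
  have -> : \bigcup_n A n = \bigcup_n B n `|` \bigcup_n Z n.
    by rewrite -bigcupU; apply: eq_bigcupr => n _; case: (hA n).
  rewrite (@cext_completion _ (\bigcup_n N n)).
  + apply: cvg_trans (prob_sigma_additive mu_prob FB tB); apply: near_eq_cvg.
    apply: nearW => n; apply: eq_bigr => i _.
    by case: (hA i) => _ FN N0 ZN ->; rewrite (cext_completion (FB i) FN N0 ZN).
  + exact: (sigma_bigcup sF).
  + by apply: (sigma_bigcup sF) => n; case: (hA n).
  + by apply: (prob_bigcup_null sF mu_prob) => // n; case: (hA n).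
  + by move=> x [n _ Zx]; exists n => //; case: (hA n) => _ _ _ /(_ x Zx).
Qed.

End Completion.

Section FamilyCompletion.
Variables (R : realType) (T : Type) (F : set (set T)).
Hypothesis sF : sigma_algebra setT F.

Lemma completion_ac (mu nu : set T -> R) :
  abs_cont F mu nu -> completion F nu `<=` completion F mu.
Proof. by move=> ac A [B [N [Z [FB FN N0 ZN ->]]]]; exists B, N, Z; split => //; exact: ac. Qed.

Lemma completion_sconv (I : Type) (Q : I -> set T -> R) (mu : set T -> R) A :
  (forall i, prob_on F (Q i)) -> sconv F Q mu ->
  (forall i, completion F (Q i) A) -> completion F mu A.
Proof.
move=> Q_prob [c [q [_ _ Qmu]]] cA.
have [B [N [Z hA]]] := completion_choice (fun k => cA (q k)).
(* [A] lies between [L] and [U], and [U `\` L] is [Q (q k)]-null for every [k]. *)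
pose L := \bigcup_k B k; pose U := \bigcap_k (B k `|` N k).
have FL : F L by apply: (sigma_bigcup sF) => k; case: (hA k).
have FU : F U by apply: (sigma_bigcap sF) => k; case: (hA k) => FB FN _ _ _; exact: sigmaU.
have FUL : F (U `\` L) by exact: sigmaD.
have ULN k : U `\` L `<=` N k.
  by move=> x [/(_ k Logic.I) [Bx|//] nLx]; exfalso; apply: nLx; exists k.
exists L, (U `\` L), (A `\` L); split => //.
- apply: cvg_eventually_cst (Qmu _ FUL) _; apply: nearW => n; apply: big1 => k _.
  case: (hA k) => _ FN N0 _ _.
  by rewrite (prob_null_sub sF (Q_prob _) FUL FN (ULN k) N0) mulr0.
- move=> x [Ax nLx]; split => // k _; case: (hA k) => _ _ _ ZN eA.
  by move: Ax; rewrite eA => -[Bx|/ZN Nx]; [left|right].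
- by rewrite setDUK // => x [k _]; case: (hA k) => _ _ _ _ -> Bx; left.
Qed.

Lemma fam_completion_ac (J I : Type) (P : J -> set T -> R) (Q : I -> set T -> R) :
  fam_ac F Q P -> fam_completion F P `<=` fam_completion F Q.
Proof. by move=> ac A cA i; have [j /completion_ac] := ac i; apply; exact: cA. Qed.

Lemma fam_completion_sconv (J I : Type) (P : J -> set T -> R) (Q : I -> set T -> R) :
  (forall i, prob_on F (Q i)) ->
  fam_ac_sconv F P Q -> fam_completion F Q `<=` fam_completion F P.
Proof.
move=> Q_prob ac A cA j; have [mu [smu /completion_ac]] := ac j; apply.
exact: completion_sconv Q_prob smu cA.
Qed.

Lemma fam_completion_localization (J I : Type) (P : J -> set T -> R)
    (Q : I -> set T -> R) (S : I -> set T) :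
  localization F P Q S -> fam_completion F P = fam_completion F Q.
Proof.
case=> Q_prob _ _ acQP acPQ; apply/seteqP; split.
- exact: fam_completion_ac.
- exact: fam_completion_sconv.
Qed.

Lemma sub_fam_completion (J : Type) (P : J -> set T -> R) :
  (forall j, prob_on F (P j)) -> F `<=` fam_completion F P.
Proof. by move=> P_prob A FA j; exact: sub_completion. Qed.

Lemma fam_completion_sigma (J : Type) (P : J -> set T -> R) :
  (forall j, prob_on F (P j)) -> sigma_algebra setT (fam_completion F P).
Proof.
move=> P_prob; split.
- by move=> j; case: (completion_sigma sF (P_prob j)).
- by move=> A cA j; case: (completion_sigma sF (P_prob j)) => _ + _; apply.
- by move=> A cA j; case: (completion_sigma sF (P_prob j)) => _ _; apply => n; exact: cA.
Qed.

End FamilyCompletion.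

Section ExtensionToCompletion.
Variables (R : realType) (T : Type) (F : set (set T)).
Hypothesis sF : sigma_algebra setT F.

Lemma cext_ext (mu nu : set T -> R) : eq_on F mu nu -> cext F mu = cext F nu.
Proof.
move=> e; apply/funext => A; congr inf; apply/seteqP.
by split=> _ [B [FB AB] <-]; exists B; rewrite ?e.
Qed.

Lemma eq_on_cext (G : set (set T)) (mu nu : set T -> R) :
  prob_on F mu -> prob_on F nu -> F `<=` G ->
  eq_on G (cext F mu) (cext F nu) <-> eq_on F mu nu.
Proof.
move=> mu_prob nu_prob FG; split => [e A FA|/cext_ext -> //].
by rewrite -(cextF sF mu_prob FA) -(cextF sF nu_prob FA) e //; exact: FG.
Qed.

Lemma cext_abs_cont (G : set (set T)) (mu nu : set T -> R) :
  prob_on F mu -> prob_on F nu -> G `<=` completion F nu ->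
  abs_cont F mu nu -> abs_cont G (cext F mu) (cext F nu).
Proof.
move=> mu_prob nu_prob GC ac A GA /(cext_null_cover sF nu_prob (GC _ GA))[H [FH AH H0]].
exact: (cext_null sF mu_prob FH AH (ac _ FH H0)).
Qed.

(* [mu'] combines the extensions [cext F (Q i)] with the weights of [mu]. *)
Lemma sconv_cext (I : Type) (Q : I -> set T -> R) (mu : set T -> R) (G : set (set T)) :
  (forall i, prob_on F (Q i)) -> G `<=` fam_completion F Q -> sconv F Q mu ->
  exists2 mu', sconv G (fun i => cext F (Q i)) mu' &
    forall A, G A -> mu' A = 0 -> exists H, [/\ F H, A `<=` H & mu H = 0].
Proof.
move=> Q_prob GQ [c [q [c0 csum Qmu]]].
pose s A n := \sum_(0 <= k < n) c k * cext F (Q (q k)) A.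
have s_cvg A : cvgn (s A).
  apply: (series_le_cvg _ c0) (cvgP _ csum) => k.
  - by rewrite mulr_ge0 ?cext_ge0.
  - by rewrite ler_piMr ?cext_le1.
exists (fun A => limn (s A)); first by exists c, q; split => // A _; exact: s_cvg.
move=> A GA sA0.
have term0 := series_ge0_eq0 (fun k => mulr_ge0 (c0 k) (cext_ge0 sF (Q_prob (q k)) A))
  (eq_ind _ (fun l => s A @ \oo --> l) (s_cvg A) _ sA0).
have /choice[H hH] k : exists H, [/\ F H, A `<=` H & c k * Q (q k) H = 0].
  have /eqP := term0 k; rewrite mulf_eq0 => /orP[/eqP ck0|/eqP cA0].
    by exists setT; split => //; [exact: sigmaT | rewrite ck0 mul0r].
  have [Hk [FHk AHk Hk0]] := cext_null_cover sF (Q_prob (q k)) (GQ _ GA (q k)) cA0.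
  by exists Hk; split => //; rewrite Hk0 mulr0.
have FH : F (\bigcap_k H k) by apply: (sigma_bigcap sF) => k; case: (hH k).
exists (\bigcap_k H k); split => // [x Ax k _|]; first by case: (hH k) => _ /(_ x Ax).
apply: cvg_eventually_cst (Qmu _ FH) _; apply: nearW => n; apply: big1 => k _.
case: (hH k) => FHk _ Hk0; apply/eqP.
rewrite eq_le mulr_ge0 ?(prob_ge0 (Q_prob _)) // andbT -Hk0.
by rewrite ler_wpM2l // (prob_le sF (Q_prob _)) // => x /(_ k Logic.I).
Qed.

End ExtensionToCompletion.

Lemma localization_cext (R : realType) (T : Type) (F : set (set T)) (J I : Type)
    (P : J -> set T -> R) (Q : I -> set T -> R) (S : I -> set T) :
  sigma_algebra setT F -> (forall j, prob_on F (P j)) -> localization F P Q S ->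
  localization (fam_completion F P) (fun j => cext F (P j)) (fun i => cext F (Q i)) S.
Proof.
move=> sF P_prob loc; have eqPQ := fam_completion_localization sF loc.
case: loc => Q_prob FS QS acQP acPQ.
have FG := sub_fam_completion sF P_prob.
have GQ : fam_completion F P `<=` fam_completion F Q by rewrite eqPQ.
split.
- by move=> i; apply: (cext_prob sF (Q_prob i)) => A /GQ.
- by move=> i; exact: FG.
- move=> i k; rewrite (cextF sF (Q_prob i) (FS k)) QS; congr (if _ then _ else _).
  apply: asbool_equiv_eq; exact: iff_sym (eq_on_cext sF (Q_prob i) (Q_prob k) FG).
- move=> i; have [j acij] := acQP i; exists j.
  by apply: (cext_abs_cont sF (Q_prob i) (P_prob j)) acij => A /(_ j).
- move=> j; have [mu [smu acj]] := acPQ j.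
  have [mu' smu' null'] := sconv_cext sF Q_prob GQ smu.
  exists mu'; split => // A GA /(null' _ GA)[H [FH AH H0]].
  exact: (cext_null sF (P_prob j) FH AH (acj _ FH H0)).
Qed.

Section HahnTransfer.
Variables (R : realType) (T : Type) (F : set (set T)).
Variables (I : Type) (Q : I -> set T -> R) (S : I -> set T).
Hypotheses (sF : sigma_algebra setT F) (Q_prob : forall i, prob_on F (Q i)).
Hypotheses (FS : forall i, F (S i)) (QS1 : forall i, Q i (S i) = 1).
Hypothesis S_disj : forall i k, i <> k -> S i `&` S k = set0.

(* Thanks to the disjoint supports, the minimality of a Hahn witness [S0] only has to be
   tested one component at a time: [S0 `\` (S i `\` C)] passes the full test. *)
Lemma hahn_null_diff (B : I -> set T) (S0 C : set T) i :
  (forall j, F (B j)) -> (forall j, B j `<=` S j) -> F S0 ->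
  (forall j, Q j (B j `\` S0) = 0) ->
  (forall G, F G -> (forall j, Q j (B j `\` G) = 0) -> forall j, Q j (S0 `\` G) = 0) ->
  F C -> Q i (B i `\` C) = 0 -> Q i (S0 `\` C) = 0.
Proof.
move=> FB BS FS0 BS0 S0_min FC BC0.
pose G := S0 `\` (S i `\` C).
have FG : F G by apply: (sigmaD sF) => //; exact: sigmaD.
have BG0 j : Q j (B j `\` G) = 0.
  have FBG := sigmaD sF (FB j) FG; have FBS0 := sigmaD sF (FB j) FS0.
  have [ji|ji] := pselect (j = i).
    subst j; have FBC := sigmaD sF (FB i) FC.
    apply: (prob_null_sub sF (Q_prob i) FBG (sigmaU sF FBS0 FBC)).
      move=> x [Bx nGx]; have [S0x|] := pselect (S0 x); last by left.
      by right; split => // Cx; apply: nGx; split => // -[_].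
    by rewrite (prob_setU_null sF) ?BS0.
  apply: (prob_null_sub sF (Q_prob j) FBG FBS0 _ (BS0 j)) => x [Bx nGx].
  split => // S0x; apply: nGx; split => // -[Six _].
  have : (S j `&` S i) x by split => //; exact: BS.
  by rewrite S_disj.
apply: (prob_null_sub sF (Q_prob i) (sigmaD sF FS0 FC)
  (sigmaU sF (sigmaD sF FS0 FG) (sigmaC sF (FS i)))).
  move=> x [S0x nCx]; have [Six|] := pselect (S i x); last by right.
  by left; split => // -[_]; apply.
have QSC0 := prob_setC_null sF (Q_prob i) (FS i) (QS1 i).
by rewrite (prob_setU_null sF (Q_prob i) (sigmaD sF FS0 FG) (sigmaC sF (FS i)) QSC0) S0_min.
Qed.

Lemma hahn_cond_cext :
  hahn_cond F Q S -> hahn_cond (fam_completion F Q) (fun i => cext F (Q i)) S.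
Proof.
move=> hahn E hE.
have [B [N [Z hEi]]] := completion_choice (fun i => proj1 (hE i) i).
have FB i : F (B i) by case: (hEi i).
have BE i : B i `<=` E i by case: (hEi i) => _ _ _ _ -> x; left.
have BS i : B i `<=` S i by move=> x /BE; exact: (proj2 (hE i)).
have [S0 [FS0 BS0 S0_min]] := hahn B (fun i => conj (FB i) (BS i)).
exists S0; split.
- exact: sub_fam_completion.
- move=> i; case: (hEi i) => _ FN N0 ZN ->.
  have FBS0 := sigmaD sF (FB i) FS0.
  apply: (cext_null sF (Q_prob i) (sigmaU sF FBS0 FN)).
    by move=> x [[Bx|/ZN Nx] nS0x]; [left|right].
  by rewrite (prob_setU_null sF (Q_prob i) FBS0 FN N0) BS0.
- move=> G cG EG0 i; have [C [M [Y [FC FM M0 YM eG]]]] := cG i.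
  have cEG := sigmaD (fam_completion_sigma sF Q_prob) (proj1 (hE i)) cG i.
  have [H [FH EGH H0]] := cext_null_cover sF (Q_prob i) cEG (EG0 i).
  have BC0 : Q i (B i `\` C) = 0.
    apply: (prob_null_sub sF (Q_prob i) (sigmaD sF (FB i) FC) (sigmaU sF FH FM)).
      move=> x [Bx nCx]; have [Gx|nGx] := pselect (G x).
        by right; move: Gx; rewrite eG => -[//|/YM].
      by left; apply: EGH; split => //; exact: BE.
    by rewrite (prob_setU_null sF (Q_prob i) FH FM M0).
  apply: (cext_null sF (Q_prob i) (sigmaD sF FS0 FC)).
    by move=> x [S0x nGx]; split => // Cx; apply: nGx; rewrite eG; left.
  exact: hahn_null_diff FB BS FS0 BS0 S0_min FC BC0.
Qed.

End HahnTransfer.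

Theorem lemma3p6 (R : realType) (T : Type) (F : set (set T))
    (J I : Type) (P : J -> set T -> R) (Q : I -> set T -> R) (S : I -> set T) :
  sigma_algebra setT F ->
  (forall j, prob_on F (P j)) ->
  localization F P Q S ->
  [/\ fam_completion F P = fam_completion F Q,
      pre_hahn_localizable (fam_completion F P) (fun j => cext F (P j)) &
      ((exists (I' : Type) (Q' : I' -> set T -> R) (S' : I' -> set T),
          [/\ localization F P Q' S', hahn_cond F Q' S' &
              (forall i k, i <> k -> S' i `&` S' k = set0)]) ->
       hahn_localizable (fam_completion F P) (fun j => cext F (P j)))].
Proof.
move=> sF P_prob loc.
have G_sigma := fam_completion_sigma sF P_prob.
have cextP_prob j : prob_on (fam_completion F P) (cext F (P j)).
  by apply: (cext_prob sF (P_prob j)) => A /(_ j).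
split.
- exact: fam_completion_localization loc.
- by split => //; exists I, (fun i => cext F (Q i)), S; exact: localization_cext.
- move=> [I' [Q' [S' [loc' hahn S'_disj]]]].
  split => //; exists I', (fun i => cext F (Q' i)), S'.
  split; first exact: localization_cext.
  rewrite (fam_completion_localization sF loc'); case: loc' => Q'_prob FS' QS' _ _.
  apply: (hahn_cond_cext sF Q'_prob FS' _ S'_disj hahn) => i.
  by rewrite QS' asboolT.
Qed.
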